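(* Let $\mathbf{k}$ be an algebraically closed field, let $K_0(\mathrm{Stck}_{\mathbf{k}})$ be the Grothendieck ring of algebraic stacks of finite type over $\mathbf{k}$ with affine automorphism group schemes, let $\mathbb{L}$ be the class of the affine line and $q=\mathbb{L}^{-1}$. Let $b\in K_0(\mathrm{Stck}_{\mathbf{k}})$, let $m\in\mathbb{Z}$ and let $n$ be a nonzero integer, and put $$a=\frac{b\,q^{m}}{1-q^{n}}\in K_0(\mathrm{Stck}_{\mathbf{k}}).$$ Write $\zeta_b(T)=1+\sum_{k\ge1}\sigma^k b\,T^k$. Then $$\zeta_{a}(T)=1+\sum_{k=1}^\infty\left(\sum_{\underline{k}=(k_1,\dots,k_s):\ \sum_{j=1}^s jk_j=k} R_{k_1,k_2,\ldots,k_s}(q^{n},q^{2n},\ldots,q^{sn})\prod_{j=1}^s(\sigma^j b)^{k_j}\right)q^{km}T^k,$$ where the inner sum runs over all partitions $\underline{k}=(k_1,\dots,k_s)$ (with $k_j\ge 0$) of the integer $k$.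
   Context: $K_0(\mathrm{Stck}_{\mathbf{k}})$ is the abelian group generated by classes $[X]$ of such stacks modulo: $[X]$ depends only on the isomorphism class; $[X]=[Y]+[U]$ for $Y$ a closed substack with complement $U$; $[E]=\mathbb{L}^r[X]$ for a vector bundle $E\to X$ of constant rank $r$; multiplication is given by the fibred product. In this ring $\mathbb{L}$ and $\mathbb{L}^j-1$ ($j\ge1$) are invertible, and the natural map from the Grothendieck ring $K_0(\mathcal{V}_{\mathbf{k}})$ of quasi-projective varieties localized at $\mathbb{L}$ and all $\mathbb{L}^j-1$ is an isomorphism onto $K_0(\mathrm{Stck}_{\mathbf{k}})$. A pre-$\lambda$ structure on a ring $R$ assigns to each $a\in R$ a series $\lambda_a(T)\in 1+T R[[T]]$ with $\lambda_a(T)\equiv 1+aT \bmod T^2$ and $\lambda_{a+b}(T)=\lambda_a(T)\lambda_b(T)$. On $K_0(\mathcal{V}_{\mathbf{k}})$ the Kapranov zeta function is $\zeta_{[X]}(T)=1+\sum_{k\ge1}[S^kX]^*T^k$, where $[S^kX]^*=\sum_{\{k_i\}:\sum ik_i=k}[((\prod_i X^{k_i})\setminus\Delta)/\prod_i S_{k_i}]$, $\Delta$ being the large diagonal (tuples with two coinciding points); in characteristic zero this equals the class of the symmetric power $X^k/S_k$. It satisfies $\zeta_{\mathbb{L}^sX}(T)=\zeta_X(\mathbb{L}^sT)$. Here $\zeta$ denotes the extension (due to Ekedahl) of this pre-$\lambda$ structure to $K_0(\mathrm{Stck}_{\mathbf{k}})$, i.e. the pre-$\lambda$ structure $a\mapsto\zeta_a(T)$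 on $K_0(\mathrm{Stck}_{\mathbf{k}})$ agreeing with the Kapranov zeta function on classes of varieties and satisfying $\zeta_{\mathbb{L}^s a}(T)=\zeta_a(\mathbb{L}^sT)$ for all $s\in\mathbb{Z}$. For nonnegative integers $n_1,\dots,n_s$, $R_{n_1,\ldots,n_s}(q_1,\ldots,q_s)$ is the rational function whose Taylor expansion is $$\sum_{\{i^{(j)}_r\}}\prod_{j=1}^s\prod_{r=1}^{n_j} q_j^{\,i^{(j)}_r},$$ the sum running over all collections of integers $i^{(j)}_r\ge0$ ($1\le j\le s$, $1\le r\le n_j$) with $i^{(j)}_1<i^{(j)}_2<\dots<i^{(j)}_{n_j}$ for each $j$ and $i^{(j_1)}_{r_1}\ne i^{(j_2)}_{r_2}$ whenever $(j_1,r_1)\ne(j_2,r_2)$. (Its denominator is a product of factors of the form $1-$monomial, so its value at $q^n,\dots,q^{sn}$ is a well-defined element of $K_0(\mathrm{Stck}_{\mathbf{k}})$.) *)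

From mathcomp Require Import all_boot all_algebra.
Set Implicit Arguments. Unset Strict Implicit. Unset Printing Implicit Defensive.
Import GRing.Theory.
Local Open Scope ring_scope.

(* A pre-lambda structure on a commutative ring R, given by the coefficients
   sigma a k := sigma^k a of zeta_a(T) = 1 + sum_{k>=1} sigma^k a T^k. *)
Definition pre_lambda (R : comRingType) (sigma : R -> nat -> R) : Prop :=
  [/\ forall a, sigma a 0%N = 1,
      forall a, sigma a 1%N = a &
      forall a b k, sigma (a + b) k = \sum_(i < k.+1) sigma a i * sigma b (k - i)%N].

(* The axioms of K_0(Stck_k) used by the statement: L and all L^j - 1 (j >= 1)
   are invertible, and zeta_{L^s a}(T) = zeta_a(L^s T) for every s in Z,
   i.e. sigma^k (L^s a) = L^(s k) sigma^k a. *)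
Definition stack_grothendieck_axioms (R : comUnitRingType) (L : R)
    (sigma : R -> nat -> R) : Prop :=
  [/\ L \is a GRing.unit,
      forall j : nat, (0 < j)%N -> L ^+ j - 1 \is a GRing.unit,
      pre_lambda sigma &
      forall (s : int) (a : R) (k : nat), sigma (L ^ s * a) k = L ^ (s * k%:Z) * sigma a k].

Definition geom (R : unitRingType) (M : R) : R := (1 - M)^-1.

(* Value at the point x = (x_1,...,x_s) of the rational function
   R_{c_1,...,c_s}(q_1,...,q_s) whose Taylor expansion is
     sum over collections i^{(j)}_r (1<=j<=s, 1<=r<=c_j), increasing in r,
     pairwise distinct, of prod q_j^{i^{(j)}_r}.
   Such a collection is the same as: a set of N = sum c_j distinct integers
   i_1 < ... < i_N together with a word w in colours of content c (the colour
   of the t-th smallest integer).  Writing i_1 = e_1, i_t = i_{t-1} + 1 + e_t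
   (e_t >= 0), the sum over the e_t of prod_t x_{w_t}^{i_t} is
     prod_{t >= 2} M_t * prod_{t >= 1} 1/(1 - M_t),  M_t = prod_{u >= t} x_{w_u}.
   Colours are indexed by 'I_s (colour j : 'I_s stands for j+1). *)
Definition Rval (R : unitRingType) (s : nat) (c : 'I_s -> nat) (x : 'I_s -> R) : R :=
  \sum_(w : {ffun 'I_(\sum_(j < s) c j) -> 'I_s}
          | [forall j : 'I_s, #|[pred t | w t == j]| == c j])
    \prod_(t < \sum_(j < s) c j)
      (let M := \prod_(u < \sum_(j < s) c j | (t <= u)%N) x (w u) in
       (if t == 0%N :> nat then 1 else M) * geom M).

From mathcomp Require Import all_boot all_algebra.
From mathcomp Require Import zify ring.
Set Implicit Arguments. Unset Strict Implicit. Unset Printing Implicit Defensive.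
Import GRing.Theory.
Local Open Scope ring_scope.

(* With P = q^m and Q = q^n, the element a is the solution of a = P b + Q a.
   Additivity of zeta and zeta_{L^s x}(T) = zeta_x(L^s T) turn this identity
   into the recursion
     sigma^r a (1 - Q^r) = sum_{i=1}^r P^i sigma^i b Q^(r-i) sigma^(r-i) a.
   Expand each summand of R_{k_1..k_s} as a word in the letters 1..s (the
   letter j carrying the weight q^(jn) and the factor sigma^j b).  Splitting
   off the first letter of a word of total weight r shows that the sum of all
   words of weight r obeys the same recursion: the factor 1/(1 - Q^r) is the
   geometric series of the first gap.  Grouping the words by their letter
   content gives back the sum over partitions. *)

Definition ffun_cons (N : nat) (T : Type) (x : T) (w : {ffun 'I_N -> T}) :
    {ffun 'I_N.+1 -> T} :=
  [ffun i => if unlift ord0 i is Some j then w j else x].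

Lemma ffun_cons0 N T (x : T) (w : {ffun 'I_N -> T}) : ffun_cons x w ord0 = x.
Proof. by rewrite ffunE unlift_none. Qed.

Lemma ffun_cons_lift N T (x : T) (w : {ffun 'I_N -> T}) j :
  ffun_cons x w (lift ord0 j) = w j.
Proof. by rewrite ffunE liftK. Qed.

Lemma big_ffun_cons (V : nmodType) N (T : finType) (F : {ffun 'I_N.+1 -> T} -> V) :
  \sum_w F w = \sum_(x : T) \sum_(w : {ffun 'I_N -> T}) F (ffun_cons x w).
Proof.
rewrite pair_bigA (reindex (fun p : T * {ffun 'I_N -> T} => ffun_cons p.1 p.2)) //.
exists (fun w : {ffun 'I_N.+1 -> T} => (w ord0, [ffun j => w (lift ord0 j)])).
  move=> [x w] _ /=; rewrite ffun_cons0; congr (_, _).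
  by apply/ffunP => j; rewrite ffunE ffun_cons_lift.
move=> w _; apply/ffunP => i; rewrite ffunE.
by case: unliftP => [j ->|->]; rewrite ?ffunE.
Qed.

Section Words.

Variables N K : nat.
Implicit Type w : {ffun 'I_N -> 'I_K}.

Definition letter_count w (j : 'I_K) : nat := #|[pred t | w t == j]|.

Definition word_weight w : nat := (\sum_(t < N) (w t).+1)%N.

Lemma sumn_by_letter w (F : 'I_K -> nat) :
  (\sum_(t < N) F (w t) = \sum_(j < K) F j * letter_count w j)%N.
Proof.
rewrite (partition_big w xpredT) //; apply: eq_bigr => j _.
rewrite (eq_bigr (fun=> F j)) => [|t /eqP->//].
by rewrite sum_nat_const mulnC.
Qed.

Lemma prod_by_letter (R : comRingType) w (F : 'I_K -> R) :
  \prod_(t < N) F (w t) = \prod_(j < K) F j ^+ letter_count w j.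
Proof.
rewrite (partition_big w xpredT) //; apply: eq_bigr => j _.
by rewrite (eq_bigr (fun=> F j)) => [|t /eqP->//]; rewrite prodr_const.
Qed.

Lemma sum_letter_count w : (\sum_j letter_count w j = N)%N.
Proof.
rewrite -[RHS]card_ord -sum1_card (sumn_by_letter w (fun=> 1%N)).
by apply: eq_bigr => j _; rewrite mul1n.
Qed.

Lemma letter_count_le w j : (letter_count w j <= N)%N.
Proof. by rewrite -[N in (_ <= N)%N]card_ord max_card. Qed.

Lemma word_weight_by_letter w :
  word_weight w = (\sum_(j < K) j.+1 * letter_count w j)%N.
Proof. exact: (sumn_by_letter w (fun j => (nat_of_ord j).+1)). Qed.

Lemma size_le_word_weight w : (N <= word_weight w)%N.
Proof. by rewrite -[N in (N <= _)%N]card_ord -sum1_card leq_sum. Qed.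

End Words.

Lemma word_weight_cons N K y (w : {ffun 'I_N -> 'I_K}) :
  word_weight (ffun_cons y w) = (y.+1 + word_weight w)%N.
Proof.
rewrite /word_weight big_ord_recl ffun_cons0.
by congr (_ + _)%N; apply: eq_bigr => t _; rewrite ffun_cons_lift.
Qed.

Definition Rval_term (R : unitRingType) N K (x : 'I_K -> R) (w : {ffun 'I_N -> 'I_K}) : R :=
  \prod_(t < N)
      (let M := \prod_(u < N | (t <= u)%N) x (w u) in
       (if t == 0%N :> nat then 1 else M) * geom M).

Lemma eq_Rval (R : unitRingType) s (c : 'I_s -> nat) (x y : 'I_s -> R) :
  x =1 y -> Rval c x = Rval c y.
Proof.
move=> xy; apply: eq_bigr => w _; apply: eq_bigr => t _ /=.
by rewrite (eq_bigr (fun u => y (w u))) // => u _.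
Qed.

Lemma Rval_term_cons (R : comUnitRingType) N K (x : 'I_K -> R) y
    (w : {ffun 'I_N -> 'I_K}) :
  Rval_term x (ffun_cons y w) =
    geom (x y * \prod_(u < N) x (w u)) * (\prod_(u < N) x (w u) * Rval_term x w).
Proof.
have tail_prod (t : 'I_N) : \prod_(u < N.+1 | (lift ord0 t <= u)%N) x (ffun_cons y w u)
    = \prod_(u < N | (t <= u)%N) x (w u).
  rewrite big_mkcond big_ord_recl /= mul1r [RHS]big_mkcond.
  by apply: eq_bigr => u _; rewrite ffun_cons_lift /bump !leq0n !add1n ltnS.
have full_prod : \prod_(u < N.+1 | (@ord0 N <= u)%N) x (ffun_cons y w u)
    = x y * \prod_(u < N) x (w u).
  rewrite big_ord_recl ffun_cons0.
  by congr (_ * _); apply: eq_bigr => u _; rewrite ffun_cons_lift.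
rewrite /Rval_term big_ord_recl /= full_prod mul1r; congr (_ * _).
under eq_bigr => t _ do rewrite tail_prod /=.
case: N w {tail_prod full_prod} => [|N] w; first by rewrite !big_ord0 mul1r.
by rewrite !big_ord_recl /= mul1r mulrA.
Qed.

Section WordSums.

Variables (R : comUnitRingType) (Q : R) (sb : nat -> R).

(* Letter [j : 'I_K] stands for the part [j.+1]: it carries [Q ^+ j.+1] in the
   rational function and [sigma^(j+1) b] as coefficient. *)
Definition word_term N K (w : {ffun 'I_N -> 'I_K}) : R :=
  Rval_term (fun j : 'I_K => Q ^+ j.+1) w * \prod_(t < N) sb (w t).+1.

Definition word_sum_size N K (r : nat) : R :=
  \sum_(w : {ffun 'I_N -> 'I_K} | word_weight w == r) word_term w.

Definition word_sum K (r : nat) : R := \sum_(N < r.+1) word_sum_size N K r.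

Lemma word_term_cons N K y (w : {ffun 'I_N -> 'I_K}) :
  word_term (ffun_cons y w) =
    sb y.+1 * geom (Q ^+ (y.+1 + word_weight w)) * Q ^+ word_weight w * word_term w.
Proof.
rewrite /word_term Rval_term_cons prodrXr -exprD big_ord_recl ffun_cons0.
by under [in X in _ * X = _]eq_bigr => t _ do rewrite ffun_cons_lift; ring.
Qed.

Lemma word_sum_size0 K r : word_sum_size 0 K r = (r == 0%N)%:R.
Proof.
rewrite /word_sum_size /word_weight; under eq_bigl do rewrite big_ord0.
case: r => [|r]; last by rewrite big_pred0.
rewrite (eq_bigr (fun=> 1)) => [|w _]; last by rewrite /word_term /Rval_term !big_ord0 mulr1.
by rewrite sumr_const card_ffun !card_ord.
Qed.

Lemma word_sum_sizeS N K r :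
  word_sum_size N.+1 K r = geom (Q ^+ r) *
    \sum_(y < K | (y < r)%N) sb y.+1 * Q ^+ (r - y.+1) * word_sum_size N K (r - y.+1).
Proof.
rewrite /word_sum_size big_mkcond big_ffun_cons mulr_sumr [RHS]big_mkcond.
apply: eq_bigr => y _ /=; case: ltnP => [y_lt_r|r_le_y].
  rewrite !mulr_sumr [RHS]big_mkcond; apply: eq_bigr => w _.
  rewrite word_weight_cons -[word_weight w == _](eqn_add2l y.+1) subnKC //.
  by case: eqP => [wr|_]; rewrite ?mulr0 // word_term_cons -wr addKn; ring.
by apply: big1 => w _; rewrite word_weight_cons; case: eqP => // wr; lia.
Qed.

Lemma word_sum_size_eq0 N K r : (r < N)%N -> word_sum_size N K r = 0.
Proof.
by move=> r_lt_N; apply: big1 => w /eqP wr; have := size_le_word_weight w; lia.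
Qed.

Lemma word_sum_rec K r : (0 < r)%N -> (r <= K)%N ->
  word_sum K r =
    geom (Q ^+ r) * \sum_(i < r) sb i.+1 * Q ^+ (r - i.+1) * word_sum K (r - i.+1).
Proof.
move=> r_gt0 r_le_K; rewrite /word_sum big_ord_recl word_sum_size0.
have -> : (r == 0%N) = false by lia.
under eq_bigr => N _ do rewrite word_sum_sizeS.
rewrite add0r -mulr_sumr exchange_big /=; congr (_ * _).
rewrite [RHS](big_ord_widen K (fun i => sb i.+1 * Q ^+ (r - i.+1) * word_sum K (r - i.+1))) //.
apply: eq_bigr => y y_lt_r; rewrite -mulr_sumr /word_sum; congr (_ * _).
rewrite [RHS](big_ord_widen r (fun N => word_sum_size N K (r - y.+1))); last lia.
rewrite [RHS]big_mkcond; apply: eq_bigr => N _.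
by case: ltnP => // weight_lt_N; rewrite word_sum_size_eq0.
Qed.

Lemma partition_term_word_sum k (p : {ffun 'I_k -> 'I_k.+1}) :
  (\sum_(j < k) j.+1 * p j)%N == k ->
  Rval (fun j => nat_of_ord (p j)) (fun j : 'I_k => Q ^+ j.+1) * \prod_(j < k) sb j.+1 ^+ p j
  = \sum_(N < k.+1) \sum_(w : {ffun 'I_N -> 'I_k} | [forall j, letter_count w j == p j])
      word_term w.
Proof.
move=> /eqP p_part.
have size_lt : (\sum_(j < k) p j < k.+1)%N.
  by rewrite ltnS -[X in (_ <= X)%N]p_part leq_sum // => j _; rewrite leq_pmull.
rewrite (bigD1 (Ordinal size_lt)) //= [X in _ = _ + X]big1 ?addr0.
  rewrite /Rval mulr_suml; apply: eq_bigr => w /forallP content.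
  rewrite /word_term (prod_by_letter w (fun j : 'I_k => sb j.+1)); congr (_ * _).
  by apply: eq_bigr => j _; rewrite -(eqP (content j)).
move=> N N_ne; apply: big1 => w /forallP content; case/eqP: N_ne; apply: val_inj.
by rewrite /= -(sum_letter_count w); apply: eq_bigr => j _; apply/eqP.
Qed.

Lemma partition_sum_word_sum k :
  \sum_(p : {ffun 'I_k -> 'I_k.+1} | (\sum_(j < k) j.+1 * p j)%N == k)
     Rval (fun j => nat_of_ord (p j)) (fun j : 'I_k => Q ^+ j.+1) * \prod_(j < k) sb j.+1 ^+ p j
  = word_sum k k.
Proof.
rewrite (eq_bigr _ (@partition_term_word_sum k)) exchange_big /word_sum.
apply: eq_bigr => N _.
rewrite (exchange_big_dep (fun w : {ffun 'I_N -> 'I_k} => word_weight w == k)) /=; last first.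
  move=> p w p_part /forallP content; rewrite word_weight_by_letter -[X in _ == X](eqP p_part).
  by apply/eqP/eq_bigr => j _; rewrite (eqP (content j)).
apply: eq_bigr => w w_weight.
pose content : {ffun 'I_k -> 'I_k.+1} := [ffun j => inord (letter_count w j)].
have contentE j : nat_of_ord (content j) = letter_count w j.
  by rewrite ffunE inordK // ltnS (leq_trans (letter_count_le w j)) // -ltnS.
rewrite (big_pred1 content) // => p /=.
apply/andP/eqP => [[_ /forallP p_content]|->].
  by apply/ffunP => j; apply: val_inj; rewrite /= contentE (eqP (p_content j)).
split; last by apply/forallP => j; rewrite contentE.
rewrite -[X in _ == X](eqP w_weight) word_weight_by_letter.
by apply/eqP/eq_bigr => j _; rewrite contentE.
Qed.

End WordSums.

Section FixedPoint.

Variables (R : comUnitRingType) (sigma : R -> nat -> R) (P Q a b : R).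
Hypothesis sigma_pre_lambda : pre_lambda sigma.
Hypothesis sigmaP : forall j, sigma (P * b) j = P ^+ j * sigma b j.
Hypothesis sigmaQ : forall j, sigma (Q * a) j = Q ^+ j * sigma a j.
Hypothesis a_fixed : a = P * b + Q * a.

Lemma sigma_fixed_point_rec r :
  sigma a r.+1 * (1 - Q ^+ r.+1) =
    \sum_(i < r.+1) P ^+ i.+1 * sigma b i.+1 * (Q ^+ (r.+1 - i.+1) * sigma a (r.+1 - i.+1)).
Proof.
case: sigma_pre_lambda => sigma0 _ sigmaD.
have := sigmaD (P * b) (Q * a) r.+1.
rewrite -a_fixed big_ord_recl sigmaP sigmaQ sigma0 expr0 !mul1r subn0 => sigma_a.
rewrite mulrBr mulr1 mulrC [X in X - _]sigma_a addrAC subrr add0r.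
by apply: eq_bigr => i _; rewrite lift0 sigmaP sigmaQ.
Qed.

Hypothesis unit_1_subQX : forall r, (0 < r)%N -> 1 - Q ^+ r \is a GRing.unit.

Lemma sigma_fixed_point_word_sum K r :
  (r <= K)%N -> sigma a r = P ^+ r * word_sum Q (sigma b) K r.
Proof.
case: sigma_pre_lambda => sigma0 _ _.
elim/ltn_ind: r => [[_ _|r IH r_le_K]].
  by rewrite sigma0 /word_sum big_ord1 word_sum_size0 mulr1.
rewrite -[sigma a r.+1](mulrK (unit_1_subQX (ltn0Sn r))) sigma_fixed_point_rec.
rewrite word_sum_rec // /geom mulr_suml !mulr_sumr; apply: eq_bigr => i _.
rewrite IH; [|lia|lia].
have -> : P ^+ r.+1 = P ^+ i.+1 * P ^+ (r.+1 - i.+1) by rewrite -exprD subnKC.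
ring.
Qed.

End FixedPoint.

Lemma unit_1_subrz (R : unitRingType) (L : R) : L \is a GRing.unit ->
  (forall j : nat, (0 < j)%N -> L ^+ j - 1 \is a GRing.unit) ->
  forall s : int, s != 0 -> 1 - L ^ s \is a GRing.unit.
Proof.
move=> L_unit LX_sub1_unit [j|j] s_neq0.
  by rewrite -opprB unitrN LX_sub1_unit //; move: s_neq0; rewrite eqz_nat; lia.
have -> : 1 - L ^ Negz j = (L ^+ j.+1)^-1 * (L ^+ j.+1 - 1).
  by rewrite NegzE -exprnN mulrBr mulVr ?mulr1 // unitrX.
by rewrite unitrMl ?LX_sub1_unit // unitrV unitrX.
Qed.

Theorem mainTheorem1 (R : comUnitRingType) (L : R) (sigma : R -> nat -> R)
    (HK : stack_grothendieck_axioms L sigma)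
    (b : R) (m n : int) (hn : n != 0) :
  let q := L^-1 in
  let a := b * q ^ m / (1 - q ^ n) in
  forall k : nat, (0 < k)%N ->
    sigma a k =
      (\sum_(p : {ffun 'I_k -> 'I_k.+1} | (\sum_(j < k) j.+1 * p j)%N == k)
          Rval (fun j => nat_of_ord (p j)) (fun j : 'I_k => q ^ (n * (j.+1)%:Z))
          * \prod_(j < k) sigma b j.+1 ^+ p j)
      * q ^ (k%:Z * m).
Proof.
move=> q a k _; case: HK => L_unit LX_sub1_unit sigma_pre_lambda sigma_scale.
have sigma_qpow (s : int) x j : sigma (q ^ s * x) j = (q ^ s) ^+ j * sigma x j.
  by rewrite exprz_inv sigma_scale -exprz_exp.
have unit_1_subQX r : (0 < r)%N -> 1 - (q ^ n) ^+ r \is a GRing.unit.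
  move=> r_gt0; rewrite exprz_inv -[_ ^+ r]/((L ^ (- n)) ^ r%:Z) exprz_exp unit_1_subrz //.
  by rewrite mulf_neq0 ?oppr_eq0 // eqz_nat; lia.
have a_fixed : a = q ^ m * b + q ^ n * a.
  have a_def : a * (1 - q ^ n) = b * q ^ m by rewrite divrK // -[q ^ n]expr1 unit_1_subQX.
  by rewrite mulrC -a_def; ring.
rewrite (sigma_fixed_point_word_sum sigma_pre_lambda (sigma_qpow _ _) (sigma_qpow _ _)
  a_fixed unit_1_subQX (leqnn k)).
under eq_bigr => p _ do under eq_Rval => j do rewrite -exprz_exp.
by rewrite partition_sum_word_sum mulrC [k%:Z * m]mulrC -exprz_exp.
Qed.
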